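(* Let $k,t$ be integers with $k\geq t\geq 1$. Then there exists a connected graph $G=G_{k,t}$ with $\Delta(G)=2t^2+1$ and $\operatorname{diam}(G)=2t^2+1+k$ such that $prc(G)\geq rc(G)+t$.
   Context: A path in an edge-coloured graph is a rainbow path if its edges receive pairwise distinct colours. The rainbow connection number $rc(G)$ of a connected graph $G$ is the minimum number of colours in an edge-colouring such that every two distinct vertices are joined by a rainbow path. The proper rainbow connection number $prc(G)$ is the minimum number of colours in a proper edge-colouring (adjacent edges get distinct colours) such that every two distinct vertices are joined by a rainbow path. $\Delta(G)$ is the maximum degree and $\operatorname{diam}(G)$ the diameter. *)

From Stdlib Require Import ClassicalEpsilon.
From mathcomp Require Import all_boot.
Set Implicit Arguments. Unset Strict Implicit. Unset Printing Implicit Defensive.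

(* The least natural number satisfying P (chosen classically). When some n
   satisfies P this is the genuine minimum (well-ordering of nat). *)
Definition least (P : nat -> Prop) : nat :=
  epsilon (inhabits 0%N) (fun n => P n /\ forall m, P m -> n <= m).

Section Graphs.
Variable T : finType.
Variable e : rel T.

Definition simple_graph : Prop := symmetric e /\ irreflexive e.

Definition connected_graph : Prop := forall u v : T, connect e u v.

Definition degree (v : T) : nat := #|[set u | e v u]|.
Definition max_degree : nat := \max_(v : T) degree v.

Definition dist (u v : T) : nat :=
  least (fun d => exists p : seq T, [/\ path e u p, last u p = v & size p = d]).
Definition diameter : nat := \max_(u : T) \max_(v : T) dist u v.

(* An edge-colouring with (at most) k colours: colour c x y of edge xy,
   independent of orientation. *)
Definition edge_colouring (k : nat) (c : T -> T -> 'I_k) : Prop :=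
  forall x y, e x y -> c x y = c y x.

Definition proper_colouring (k : nat) (c : T -> T -> 'I_k) : Prop :=
  forall x y z, e x y -> e x z -> y != z -> c x y != c x z.

Definition rainbow_path (k : nat) (c : T -> T -> 'I_k) (u v : T) (p : seq T) : bool :=
  [&& path e u p, last u p == v, uniq (u :: p) & uniq (pairmap c u p)].

Definition rainbow_connected (k : nat) (c : T -> T -> 'I_k) : Prop :=
  forall u v : T, u != v -> exists p : seq T, rainbow_path c u v p.

Definition rc : nat :=
  least (fun k => exists c : T -> T -> 'I_k, edge_colouring c /\ rainbow_connected c).

Definition prc : nat :=
  least (fun k => exists c : T -> T -> 'I_k,
           [/\ edge_colouring c, proper_colouring c & rainbow_connected c]).
End Graphs.

From Stdlib Require Import ClassicalEpsilon Classical.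
From mathcomp Require Import all_boot zify.
Set Implicit Arguments. Unset Strict Implicit. Unset Printing Implicit Defensive.

(* The graph is the windmill of d = t^2 triangles (blades) sharing a centre,
   with a path (tail) of length L = 2t^2 + k hanging from the centre: its
   maximum degree 2d + 1 is reached at the centre and its diameter L + 1 is the
   distance from the end of the tail to a blade.
   Colouring the tail edges with L colours and spending two more colours on the
   blades (one if d = 1) rainbow-connects the graph, so rc <= L + 2.
   Conversely, in a rainbow colouring the rainbow path from the centre to the
   end of the tail gives the L tail edges distinct colours, and the rainbow path
   from a blade vertex to the end of the tail leaves its blade through a spoke
   whose colour is not a tail colour.  In a proper colouring the spokes found in
   this way in the d blades all meet at the centre, so prc >= L + d; one blade
   already needs two colours off the tail, so prc >= L + 2.  As t^2 >= t + 2
   for t >= 2, and rc <= L + 1 for t = 1, prc >= rc + t. *)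

Lemma least_spec (P : nat -> Prop) :
  (exists n, P n) -> P (least P) /\ forall m, P m -> least P <= m.
Proof.
move=> [n Pn].
have ex_min : exists n, P n /\ forall m, P m -> n <= m.
  elim/ltn_ind: n Pn => n IH Pn.
  case: (classic (exists2 m, m < n & P m)) => [[m lt_mn Pm]|no_smaller].
    exact: IH lt_mn Pm.
  exists n; split => // m Pm; rewrite leqNgt; apply/negP => lt_mn.
  by apply: no_smaller; exists m.
exact: epsilon_spec ex_min.
Qed.

Lemma least_le (P : nat -> Prop) m : P m -> least P <= m.
Proof. by move=> Pm; apply: (proj2 (least_spec (ex_intro _ m Pm))). Qed.

Lemma uniq_map_inj (T U : eqType) (f : T -> U) s a b :
  uniq (map f s) -> a \in s -> b \in s -> f a = f b -> a = b.
Proof.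
elim: s => [|z s IH] //= /andP [fz_notin uniq_fs].
rewrite !inE => /orP [/eqP ->|as_] /orP [/eqP ->|bs] // fab.
- by move: fz_notin; rewrite fab (map_f f bs).
- by move: fz_notin; rewrite -fab (map_f f as_).
- exact: IH.
Qed.

Section Walks.
Variable T : eqType.
Implicit Types (x : T) (p : seq T).

Lemma last_rev_belast x p : last (last x p) (rev (belast x p)) = x.
Proof. by case: p => [|y p] //=; rewrite rev_cons last_rcons. Qed.

Lemma mem_rev_belast x p : last x p :: rev (belast x p) =i x :: p.
Proof. by move=> z; rewrite -rev_rcons -lastI mem_rev. Qed.

Lemma uniq_rev_belast x p : uniq (last x p :: rev (belast x p)) = uniq (x :: p).
Proof. by rewrite -rev_rcons -lastI rev_uniq. Qed.

Lemma pairmap_rev_belast (U : Type) (f : T -> T -> U) x p :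
  (forall a b, f a b = f b a) ->
  pairmap f (last x p) (rev (belast x p)) = rev (pairmap f x p).
Proof.
move=> fC; elim: p x => [|y p IH] x //=.
by rewrite rev_cons -cats1 pairmap_cat IH /= last_rev_belast rev_cons -cats1 fC.
Qed.

Lemma pairmap_zip (U : Type) (f : T -> T -> U) x p :
  pairmap f x p = [seq f ab.1 ab.2 | ab <- zip (x :: p) p].
Proof. by elim: p x => [|y p IH] x //=; rewrite IH. Qed.

Lemma mem_zip_edge (e : rel T) x p a b :
  path e x p -> (a, b) \in zip (x :: p) p -> e a b.
Proof.
elim: p x => [|y p IH] x //= /andP [exy pp].
by rewrite inE => /orP [/eqP [-> ->] //|]; apply: IH.
Qed.

Lemma mem_zip_pair (s t : seq T) a b : (a, b) \in zip s t -> a \in s /\ b \in t.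
Proof.
elim: s t => [|x s IH] [|y t] //=.
rewrite inE => /orP [/eqP [-> ->]|/IH [as_ bt]]; first by rewrite !inE !eqxx.
by rewrite !inE as_ bt !orbT.
Qed.

Lemma path_crossing (P : pred T) x p : P x -> ~~ P (last x p) ->
  exists a b, [/\ (a, b) \in zip (x :: p) p, P a & ~~ P b].
Proof.
elim: p x => [|y p IH] x /=; first by move=> ->.
move=> Px Plast; case Py: (P y).
  have [a [b [ab_p Pa Pb]]] := IH y Py Plast.
  by exists a, b; rewrite inE ab_p orbT.
by exists x, y; rewrite inE eqxx Py.
Qed.

Lemma rainbow_edges_inj (U : eqType) (c : T -> T -> U) x p ab ab' :
  uniq (pairmap c x p) ->
  ab \in zip (x :: p) p -> ab' \in zip (x :: p) p ->
  c ab.1 ab.2 = c ab'.1 ab'.2 -> ab = ab'.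
Proof. by rewrite pairmap_zip; apply: uniq_map_inj. Qed.

Lemma path_potential (e : rel T) (h : T -> nat) x p :
  (forall a b, e a b -> h b <= (h a).+1) -> path e x p ->
  h (last x p) <= h x + size p.
Proof.
move=> h_lip; elim: p x => [|y p IH] x /=; first by rewrite addn0.
by case/andP => /h_lip h_xy /IH; lia.
Qed.

End Walks.

Lemma uniq_ord_size K (s : seq 'I_K) : uniq s -> size s <= K.
Proof. by move/card_uniqP <-; rewrite -[X in _ <= X]card_ord max_card. Qed.

Lemma last_iota x m : last x (iota x.+1 m) = x + m.
Proof. by elim: m x => [|m IH] x /=; rewrite ?addn0 ?IH ?addSnnS. Qed.

Lemma map_pairmap (T U V : Type) (f : U -> V) (g : T -> T -> U) x s :
  map f (pairmap g x s) = pairmap (fun a b => f (g a b)) x s.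
Proof. by elim: s x => [|y s IH] x //=; rewrite IH. Qed.

Lemma pairmap_map (T T' U : Type) (f : T -> T') (g : T' -> T' -> U) x s :
  pairmap g (f x) (map f s) = pairmap (fun a b => g (f a) (f b)) x s.
Proof. by elim: s x => [|y s IH] x //=; rewrite IH. Qed.

Lemma map_val_inord n (s : seq nat) :
  all (fun z => z <= n) s -> map val (map (@inord n) s) = s.
Proof. by elim: s => [|x s IH] //= /andP [xn /IH ->]; rewrite inordK. Qed.

Lemma mem_map_inord n (s : seq nat) (u : 'I_n.+1) : all (fun z => z <= n) s ->
  (u \in map (@inord n) s) = (val u \in s).
Proof.
move=> /allP bounded; apply/mapP/idP => [[x xs ->]|us].
  by rewrite /= inordK // ltnS bounded.
by exists (val u); rewrite ?inord_val.
Qed.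

Lemma uniq_map_inord n (s : seq nat) : all (fun z => z <= n) s ->
  uniq (map (@inord n) s) = uniq s.
Proof.
move=> /allP bounded; apply: map_inj_in_uniq => x y xs ys /(congr1 val).
by rewrite /= !inordK // ltnS bounded.
Qed.

Section ProperRainbowColouring.
Variable T : finType.
Implicit Types (x : T) (p : seq T).

Lemma uniq_pairmap_set2 x p :
  uniq (x :: p) -> uniq (pairmap (fun a b => [set a; b]) x p).
Proof.
elim: p x => [|y p IH] x //= /andP [x_notin uniq_yp].
rewrite IH // andbT pairmap_zip; apply/mapP => -[[a b] ab_p /setP /(_ x)].
have [a_yp b_p] := mem_zip_pair ab_p.
rewrite /= set21 => /esym /set2P [xa|xb]; move: x_notin.
  by rewrite xa a_yp.
by rewrite xb inE b_p orbT.
Qed.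

(* Without such a colouring [prc] would be a junk value.  Colouring each edge by
   the rank of its set of ends is proper and makes every path with distinct
   vertices rainbow. *)
Lemma proper_rainbow_colouring_exists (e : rel T) : connected_graph e ->
  exists K (c : T -> T -> 'I_K),
    [/\ edge_colouring e c, proper_colouring e c & rainbow_connected e c].
Proof.
move=> conn; pose c x y := enum_rank [set x; y].
exists #|{set T}|, c; split.
- by move=> x y _; rewrite /c setUC.
- move=> x y z _ _ yz; apply: contraNneq yz => /enum_rank_inj /setP xy_xz.
  have /set2P [yx|-> //] : y \in [set x; z] by rewrite -xy_xz set22.
  have /set2P [zx|zy] : z \in [set x; y] by rewrite xy_xz set22.
    by rewrite yx zx.
  by rewrite zy.
- move=> u v _; have /connectP [p pp ->] := conn u v.
  case: (shortenP pp) => p' pp' uniq_p' _.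
  exists p'; rewrite /rainbow_path pp' eqxx uniq_p' /=.
  have -> : pairmap c u p' = map enum_rank (pairmap (fun a b => [set a; b]) u p').
    by rewrite map_pairmap.
  by rewrite map_inj_uniq ?uniq_pairmap_set2 //; apply: enum_rank_inj.
Qed.

End ProperRainbowColouring.

Section Distance.
Variables (T : finType) (e : rel T).

Lemma dist_le_size u p : path e u p -> dist e u (last u p) <= size p.
Proof. by move=> pp; apply: least_le; exists p. Qed.

Lemma shortest_path u v : connect e u v ->
  exists p, [/\ path e u p, last u p = v & size p = dist e u v].
Proof.
move=> /connectP [p pp lp].
pose walk_of_size n := exists q, [/\ path e u q, last u q = v & size q = n].
have walk_p : walk_of_size (size p) by exists p.
by have [[q ?] _] := least_spec (ex_intro walk_of_size _ walk_p); exists q.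
Qed.

End Distance.

(* Vertex 0 is the centre, 1, ..., L is the tail, and the j-th blade (j < d)
   is the triangle 0, L+1+2j, L+2+2j. *)
Section TailedWindmill.
Variables L d : nat.

Definition maxv := L + 2 * d.

Local Notation vtx i := (@inord maxv i).

Lemma vtxK i : i <= L + 2 * d -> nat_of_ord (vtx i) = i.
Proof. by move=> ?; rewrite /= inordK. Qed.

Definition tw_adj : rel nat := fun x y =>
  [|| (x <= L) && (y <= L) && ((x == y.+1) || (y == x.+1)),
      (x == 0) && (L < y), (y == 0) && (L < x) |
      [&& L < x, L < y, x != y & (x - L.+1) %/ 2 == (y - L.+1) %/ 2]].

Definition tailed_windmill : rel 'I_maxv.+1 := fun a b => tw_adj a b.

(* The tail edge i(i+1) has colour i and the spokes to L+1+2j colour L.  With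
   several blades, the spokes to L+2+2j reuse colour 0 and the rims get the new
   colour L+1; a single blade gets colour L on both spokes and 0 on the rim. *)
Definition tw_col (x y : nat) : nat :=
  if maxn x y <= L then minn x y
  else if minn x y == 0 then
    (if ((maxn x y - L.+1) %% 2 == 0) || (d == 1) then L else 0)
  else (if d == 1 then 0 else L.+1).

Definition tw_ncol := if d == 1 then L.+1 else L.+2.

Lemma tw_adjC x y : tw_adj x y = tw_adj y x.
Proof. by rewrite /tw_adj; apply/idP/idP; lia. Qed.

Lemma tw_colC x y : tw_col x y = tw_col y x.
Proof. by rewrite /tw_col minnC maxnC. Qed.

Lemma tw_col_lt x y : tw_col x y < tw_ncol.
Proof. by rewrite /tw_col /tw_ncol; repeat case: ifP => ?; lia. Qed.

Lemma tw_col_tail i : i < L -> tw_col i i.+1 = i.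
Proof. by move=> ?; rewrite /tw_col; repeat case: ifP => ?; lia. Qed.

Definition tw_colouring (a b : 'I_maxv.+1) : 'I_tw_ncol := Ordinal (tw_col_lt a b).

Lemma simple_tailed_windmill : simple_graph tailed_windmill.
Proof.
split=> [a b|a]; first by rewrite /tailed_windmill tw_adjC.
by rewrite /tailed_windmill /tw_adj; lia.
Qed.

Lemma blade_vertex w : L < w <= maxv ->
  exists2 j, j < d & w = L.+1 + 2 * j \/ w = L.+2 + 2 * j.
Proof. by rewrite /maxv => ?; exists ((w - L.+1) %/ 2); lia. Qed.

Lemma blade_neighbour w w' y :
  L < w -> L < w' -> tw_adj w w' -> tw_adj w y -> y = 0 \/ y = w'.
Proof. by rewrite /tw_adj; lia. Qed.

Lemma path_tw_adj_iota x m : x + m <= L -> path tw_adj x (iota x.+1 m).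
Proof.
elim: m x => [|m IH] x //= h; rewrite IH; last lia.
by rewrite andbT /tw_adj; lia.
Qed.

Lemma pairmap_tw_col_iota x m :
  x + m <= L -> pairmap tw_col x (iota x.+1 m) = iota x m.
Proof.
elim: m x => [|m IH] x //= h; rewrite IH; last lia.
by rewrite tw_col_tail //; lia.
Qed.

(* Walks are built on nat and then transported to 'I_maxv.+1 by inord, which
   is why they carry the bound maxv. *)
Definition bounded_walk x y s :=
  [&& all (fun z => z <= maxv) (x :: s), path tw_adj x s & last x s == y].

Definition rainbow_walk x y s :=
  [&& bounded_walk x y s, uniq (x :: s) & uniq (pairmap tw_col x s)].

Definition short_walk x y s := bounded_walk x y s && (size s <= L.+1).

Lemma bounded_walk_rev x y s :
  bounded_walk x y s -> bounded_walk y x (rev (belast x s)).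
Proof.
case/and3P => /allP bounded p /eqP <-; apply/and3P; split.
- by apply/allP => z; rewrite mem_rev_belast; apply: bounded.
- by rewrite rev_path; apply: sub_path p => a b /=; rewrite tw_adjC.
- by rewrite last_rev_belast.
Qed.

Lemma rainbow_walk_rev x y s :
  rainbow_walk x y s -> rainbow_walk y x (rev (belast x s)).
Proof.
case/and3P => w u cu; rewrite /rainbow_walk bounded_walk_rev //.
case/and3P: w => _ _ /eqP <-.
by rewrite uniq_rev_belast u pairmap_rev_belast ?rev_uniq //; apply: tw_colC.
Qed.

Lemma short_walk_rev x y s :
  short_walk x y s -> short_walk y x (rev (belast x s)).
Proof.
case/andP => w sz.
by rewrite /short_walk bounded_walk_rev // size_rev size_belast.
Qed.

Ltac bounded_walk_tac := apply/and3P; split;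
  [ apply/allP => z; rewrite /maxv !inE ?mem_iota; lia
  | rewrite /= ?path_tw_adj_iota ?andbT /tw_adj; lia
  | rewrite /= ?last_iota; apply/eqP; lia ].

Ltac rainbow_walk_tac := apply/and3P; split;
  [ bounded_walk_tac
  | rewrite /= !inE ?mem_iota ?iota_uniq ?andbT; lia
  | rewrite /= ?pairmap_tw_col_iota ?inE ?mem_iota ?iota_uniq ?andbT /tw_col;
    repeat case: ifP => ?; lia ].

Ltac short_walk_tac :=
  apply/andP; split; [bounded_walk_tac | rewrite /= ?size_iota; lia].

Lemma rainbow_walk_tail x y :
  x < y <= L -> rainbow_walk x y (iota x.+1 (y - x)).
Proof.
move=> ?; apply/and3P; split.
- apply/and3P; split; first by apply/allP => z; rewrite inE mem_iota /maxv; lia.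
    by apply: path_tw_adj_iota; lia.
  by rewrite last_iota; apply/eqP; lia.
- by rewrite -[_ :: _]/(iota x (y - x).+1) iota_uniq.
- by rewrite pairmap_tw_col_iota ?iota_uniq //; lia.
Qed.

Lemma rainbow_walk_blade_tail w y : L < w <= maxv -> y <= L ->
  exists s, rainbow_walk w y s.
Proof.
move=> hw hy; have [j hj [->|->]] := blade_vertex hw.
  by exists (0 :: iota 1 y); rainbow_walk_tac.
case d1: (d == 1).
  by exists (0 :: iota 1 y); rainbow_walk_tac.
by exists (L.+1 + 2 * j :: 0 :: iota 1 y); rainbow_walk_tac.
Qed.

Hypothesis L_gt0 : 0 < L.

Lemma rainbow_walk_blades w w' : L < w <= maxv -> L < w' <= maxv -> w != w' ->
  exists s, rainbow_walk w w' s.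
Proof.
move=> hw hw' ww'.
have [i hi wi] := blade_vertex hw; have [j hj w'j] := blade_vertex hw'.
case: (eqVneq i j) => [eij|nij].
  subst j; exists [:: w'].
  by case: wi => ?; case: w'j => ?; subst w w'; rainbow_walk_tac.
have d1 : (d == 1) = false by apply/negbTE; apply/eqP; lia.
case: wi => ->; case: w'j => ->.
- by exists [:: L.+2 + 2 * i; 0; L.+1 + 2 * j]; rainbow_walk_tac.
- by exists [:: 0; L.+2 + 2 * j]; rainbow_walk_tac.
- by exists [:: 0; L.+1 + 2 * j]; rainbow_walk_tac.
- by exists [:: 0; L.+1 + 2 * j; L.+2 + 2 * j]; rainbow_walk_tac.
Qed.

Lemma rainbow_walk_exists x y : x <= maxv -> y <= maxv -> x != y ->
  exists s, rainbow_walk x y s.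
Proof.
move=> hx hy xy.
case: (leqP x L) => hxL; case: (leqP y L) => hyL.
- case: (ltngtP x y) => [lt_xy|lt_yx|eq_xy]; last by rewrite eq_xy eqxx in xy.
    by exists (iota x.+1 (y - x)); apply: rainbow_walk_tail; lia.
  exists (rev (belast y (iota y.+1 (x - y)))).
  by apply: rainbow_walk_rev; apply: rainbow_walk_tail; lia.
- have [s ys] := @rainbow_walk_blade_tail y x ltac:(lia) hxL.
  by exists (rev (belast y s)); apply: rainbow_walk_rev.
- by apply: rainbow_walk_blade_tail; rewrite ?hxL.
- by apply: rainbow_walk_blades; rewrite ?hxL ?hyL.
Qed.

Lemma short_walk_exists x y : x <= maxv -> y <= maxv -> exists s, short_walk x y s.
Proof.
move=> hx hy; case: (eqVneq x y) => [<-|xy].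
  by exists [::]; rewrite /short_walk /bounded_walk /= hx eqxx.
case: (leqP x L) => hxL; case: (leqP y L) => hyL.
- case: (leqP x y) => [le_xy|lt_yx].
    by exists (iota x.+1 (y - x)); short_walk_tac.
  exists (rev (belast y (iota y.+1 (x - y)))).
  by apply: short_walk_rev; short_walk_tac.
- have [j hj yj] := @blade_vertex y ltac:(lia).
  exists (rev (belast y (0 :: iota 1 x))); apply: short_walk_rev.
  by case: yj => ->; short_walk_tac.
- have [j hj xj] := @blade_vertex x ltac:(lia).
  by exists (0 :: iota 1 y); case: xj => ->; short_walk_tac.
- have [i hi xi] := @blade_vertex x ltac:(lia).
  have [j hj yj] := @blade_vertex y ltac:(lia).
  case: (eqVneq i j) => [eij|_].
    subst j; exists [:: y].
    by case: xi => ?; case: yj => ?; subst x y; short_walk_tac.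
  by exists [:: 0; y]; case: xi => ->; case: yj => ->; short_walk_tac.
Qed.

Lemma bounded_walk_path x y s : bounded_walk x y s ->
  [/\ path tailed_windmill (vtx x) (map (@inord maxv) s),
      last (vtx x) (map (@inord maxv) s) = vtx y,
      val (vtx x) = x & map val (map (@inord maxv) s) = s].
Proof.
case/and3P => /andP [hx hs] p /eqP <-.
have val_x : val (vtx x) = x by rewrite /= inordK.
have val_s : map val (map (@inord maxv) s) = s by rewrite map_val_inord.
split => //; last by rewrite last_map.
by rewrite -(mono_path (f := val) (e' := tw_adj)) // val_x val_s.
Qed.

Lemma rainbow_walk_path x y s : rainbow_walk x y s ->
  rainbow_path tailed_windmill tw_colouring (vtx x) (vtx y) (map (@inord maxv) s).
Proof.
case/and3P => /bounded_walk_path [p l val_x val_s] u cu.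
apply/and4P; split => //; first by rewrite l.
  by rewrite -(map_inj_uniq val_inj) /= val_x val_s.
by rewrite -(map_inj_uniq val_inj) map_pairmap -(pairmap_map val tw_col) val_x val_s.
Qed.

Lemma rainbow_connected_tw_colouring :
  rainbow_connected tailed_windmill tw_colouring.
Proof.
move=> u v uv; have [s us] := rainbow_walk_exists (ltn_ord u) (ltn_ord v) uv.
exists (map (@inord maxv) s).
by rewrite -[u]inord_val -[v]inord_val rainbow_walk_path.
Qed.

Lemma connected_tailed_windmill : connected_graph tailed_windmill.
Proof.
move=> u v; case: (eqVneq u v) => [->|uv]; first exact: connect0.
have [p /and4P [pp /eqP <- _ _]] := rainbow_connected_tw_colouring uv.
by apply/connectP; exists p.
Qed.

Lemma rc_tailed_windmill_le : rc tailed_windmill <= tw_ncol.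
Proof.
apply: least_le; exists tw_colouring; split; last exact: rainbow_connected_tw_colouring.
by move=> a b _; apply: val_inj; rewrite /= tw_colC.
Qed.

Lemma dist_tailed_windmill_le u v : dist tailed_windmill u v <= L.+1.
Proof.
have [s /andP [w sz]] := short_walk_exists (ltn_ord u) (ltn_ord v).
have [p l _ _] := bounded_walk_path w.
rewrite !inord_val in p l; rewrite -l.
by apply: leq_trans (dist_le_size p) _; rewrite size_map.
Qed.

Hypothesis d_gt0 : 0 < d.

Lemma dist_tail_end_blade : L.+1 <= dist tailed_windmill (vtx L) (vtx L.+1).
Proof.
have [p [pp lp <-]] :=
  shortest_path (connected_tailed_windmill (vtx L) (vtx L.+1)).
(* [h z] is the distance from [z] to the tail end [L]. *)
pose h (z : 'I_maxv.+1) := if z <= L then L - z else L.+1.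
have h_lip a b : tailed_windmill a b -> h b <= (h a).+1.
  by rewrite /tailed_windmill /tw_adj /h; do 2 case: ifP; lia.
have [vL vL1] : nat_of_ord (vtx L) = L /\ nat_of_ord (vtx L.+1) = L.+1.
  by rewrite !vtxK; lia.
by have := path_potential h_lip pp; rewrite lp /h vL vL1 leqnn ltnn subnn.
Qed.

Lemma diameter_tailed_windmill : diameter tailed_windmill = L.+1.
Proof.
apply/eqP; rewrite eqn_leq; apply/andP; split.
  apply/bigmax_leqP => u _; apply/bigmax_leqP => v _.
  exact: dist_tailed_windmill_le.
apply: (bigmax_sup (vtx L)) => //; apply: (bigmax_sup (vtx L.+1)) => //.
exact: dist_tail_end_blade.
Qed.

Lemma degree_centre : degree tailed_windmill (vtx 0) = (2 * d).+1.
Proof.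
pose nbrs := 1 :: iota L.+1 (2 * d).
have bounded : all (fun z => z <= maxv) nbrs.
  by apply/allP => z; rewrite inE mem_iota /maxv; lia.
have nbrsP : [set u | tailed_windmill (vtx 0) u] =i map (@inord maxv) nbrs.
  move=> u; rewrite inE mem_map_inord // /tailed_windmill vtxK //.
  rewrite inE mem_iota /tw_adj /=.
  by have := ltn_ord u; rewrite /maxv => ?; apply/idP/idP; lia.
have /card_uniqP card_nbrs : uniq (map (@inord maxv) nbrs).
  by rewrite uniq_map_inord // /nbrs /= mem_iota iota_uniq; lia.
by rewrite /degree (eq_card nbrsP) card_nbrs size_map /nbrs /= size_iota.
Qed.

Lemma degree_off_centre v : v != vtx 0 -> degree tailed_windmill v <= 3.
Proof.
move=> v_ne0; rewrite /degree.
apply: leq_trans (card_size [:: vtx v.-1; vtx v.+1; vtx 0]).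
apply/subset_leq_card/subsetP => u; rewrite inE /tailed_windmill /tw_adj => vu.
have v_pos : 0 < v.
  by rewrite lt0n; apply: contra v_ne0 => /eqP v0; rewrite -v0 inord_val.
have : [|| u == v.-1 :> nat, u == v.+1 :> nat | u == 0 :> nat] by lia.
by rewrite !inE => /or3P [] /eqP <-; rewrite inord_val eqxx ?orbT.
Qed.

Lemma max_degree_tailed_windmill : max_degree tailed_windmill = (2 * d).+1.
Proof.
apply/eqP; rewrite eqn_leq; apply/andP; split.
  apply/bigmax_leqP => v _; have [->|v_ne0] := eqVneq v (vtx 0).
    by rewrite degree_centre.
  by apply: leq_trans (degree_off_centre v_ne0) _; lia.
by apply: (bigmax_sup (vtx 0)) => //; rewrite degree_centre.
Qed.

Lemma path_crosses_tail (s : 'I_maxv.+1) p i : (s == 0 :> nat) || (L < s) ->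
  path tailed_windmill s p -> last s p = vtx L -> i < L ->
  (vtx i, vtx i.+1) \in zip (s :: p) p.
Proof.
move=> hs pp lp lt_iL.
pose P (z : 'I_maxv.+1) := (z <= i) || (L < z).
have Ps : P s by rewrite /P; lia.
have not_P_last : ~~ P (last s p) by rewrite lp /P vtxK; lia.
have [a [b [ab_p Pa Pb]]] := path_crossing Ps not_P_last.
have := mem_zip_edge pp ab_p; rewrite /tailed_windmill /tw_adj => adj_ab.
have a_i : a = vtx i by apply: ord_inj; rewrite vtxK; move: Pa Pb; rewrite /P; lia.
have b_i : b = vtx i.+1 by apply: ord_inj; rewrite vtxK; move: Pa Pb; rewrite /P; lia.
by rewrite -a_i -b_i.
Qed.

Section LowerBound.
Variables (K : nat) (c : 'I_maxv.+1 -> 'I_maxv.+1 -> 'I_K).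
Hypotheses (c_sym : edge_colouring tailed_windmill c)
  (c_proper : proper_colouring tailed_windmill c)
  (c_rainbow : rainbow_connected tailed_windmill c).

Definition tail_colours := [seq c (vtx i) (vtx i.+1) | i <- iota 0 L].

Lemma rainbow_path_off_tail (s : 'I_maxv.+1) p a b :
  (s == 0 :> nat) || (L < s) -> rainbow_path tailed_windmill c s (vtx L) p ->
  (a, b) \in zip (s :: p) p -> L < a -> c a b \notin tail_colours.
Proof.
move=> hs /and4P [pp /eqP lp _ rainbow] ab_p La; apply/mapP => -[i].
rewrite mem_iota => /andP [_ lt_iL] cab.
have tail_i := path_crosses_tail hs pp lp lt_iL.
have [a_i _] := rainbow_edges_inj rainbow ab_p tail_i cab.
by move: La; rewrite a_i vtxK; lia.
Qed.

Lemma uniq_tail_colours : uniq tail_colours.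
Proof.
have [|p rp] := c_rainbow (u := vtx 0) (v := vtx L).
  by apply/eqP => /(congr1 (@nat_of_ord _)); rewrite !vtxK; lia.
have /and4P [pp /eqP lp _ rainbow] := rp.
have h0 : (vtx 0 == 0 :> nat) || (L < vtx 0) by rewrite vtxK.
rewrite map_inj_in_uniq ?iota_uniq // => i j.
rewrite !mem_iota => /andP [_ lt_iL] /andP [_ lt_jL] cij.
have tail_i := path_crosses_tail h0 pp lp lt_iL.
have tail_j := path_crosses_tail h0 pp lp lt_jL.
have [/(congr1 (@nat_of_ord _))] := rainbow_edges_inj rainbow tail_i tail_j cij.
by rewrite !vtxK; lia.
Qed.

(* The rainbow path from [w] to the tail end spends every tail colour on the
   tail, and it starts with the spoke at [w] or with the rim and the spoke at
   [w']. *)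
Lemma blade_exit (w w' : 'I_maxv.+1) : L < w -> L < w' -> tailed_windmill w w' ->
  c w (vtx 0) \notin tail_colours \/
  c w w' \notin tail_colours /\ c w' (vtx 0) \notin tail_colours.
Proof.
move=> Lw Lw' ww'.
have [|p rp] := c_rainbow (u := w) (v := vtx L).
  by apply/eqP => /(congr1 (@nat_of_ord _)); rewrite vtxK; lia.
have hw : (w == 0 :> nat) || (L < w) by rewrite Lw orbT.
have off_tail a b := rainbow_path_off_tail (a := a) (b := b) hw rp.
have /and4P [pp /eqP lp uniq_p _] := rp.
case: p {rp} pp lp uniq_p off_tail => [|y p] /=.
  by move=> _ wL; move: Lw; rewrite wL vtxK; lia.
case/andP => wy pp lp uniq_p off_tail.
have [y0|yw'] := blade_neighbour Lw Lw' ww' wy.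
  left; have -> : vtx 0 = y by apply: ord_inj; rewrite vtxK.
  by apply: off_tail; rewrite ?inE ?eqxx.
have {yw'} y_w' : y = w' by apply: ord_inj.
subst y.
case: p pp lp uniq_p off_tail => [|z p] /=.
  by move=> _ w'L; move: Lw'; rewrite w'L vtxK; lia.
case/andP => w'z _ _ uniq_p off_tail.
have z_ne_w : z != w by apply: contraTneq uniq_p => ->; rewrite /= !inE eqxx !orbT.
have w'w : tailed_windmill w' w by rewrite /tailed_windmill tw_adjC.
have [z0|zw] := blade_neighbour Lw' Lw w'w w'z.
  have -> : vtx 0 = z by apply: ord_inj; rewrite vtxK.
  by right; split; apply: off_tail; rewrite // !inE eqxx ?orbT.
by case/eqP: z_ne_w; apply: ord_inj.
Qed.

Lemma spoke_colours_neq (x y : 'I_maxv.+1) : L < x -> L < y -> x != y ->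
  c x (vtx 0) != c y (vtx 0).
Proof.
move=> Lx Ly xy.
have spoke (z : 'I_maxv.+1) : L < z -> tailed_windmill (vtx 0) z.
  by rewrite /tailed_windmill /tw_adj vtxK; lia.
by rewrite -(c_sym (spoke _ Lx)) -(c_sym (spoke _ Ly)) c_proper ?spoke.
Qed.

Lemma off_tail_colours_le (s : seq 'I_K) :
  uniq s -> all (fun x => x \notin tail_colours) s -> L + size s <= K.
Proof.
move=> uniq_s /allP off_tail.
have uniq_ts : uniq (tail_colours ++ s).
  rewrite cat_uniq uniq_tail_colours uniq_s andbT.
  by apply/hasPn => x /off_tail.
by have := uniq_ord_size uniq_ts; rewrite size_cat size_map size_iota.
Qed.

Lemma tail_add2_le_of_spoke_on_tail (w w' : 'I_maxv.+1) :
  L < w -> L < w' -> tailed_windmill w w' ->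
  c w (vtx 0) \in tail_colours -> L + 2 <= K.
Proof.
move=> Lw Lw' ww' w_on.
have [|[ww'_off w'_off]] := blade_exit Lw Lw' ww'; first by rewrite w_on.
apply: (off_tail_colours_le (s := [:: c w w'; c w' (vtx 0)])).
  have w'w : tailed_windmill w' w by rewrite /tailed_windmill tw_adjC.
  have w'0 : tailed_windmill w' (vtx 0) by rewrite /tailed_windmill /tw_adj vtxK; lia.
  have w_ne0 : w != vtx 0.
    by apply/eqP => /(congr1 (@nat_of_ord _)); rewrite vtxK; lia.
  by rewrite /= inE (c_sym ww') c_proper.
by rewrite /= ww'_off w'_off.
Qed.

Lemma tail_add2_le_ncolours : L + 2 <= K.
Proof.
pose u := vtx L.+1; pose v := vtx L.+2.
have [Lu Lv] : L < u /\ L < v by rewrite !vtxK; lia.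
have uv : tailed_windmill u v by rewrite /tailed_windmill /tw_adj !vtxK; lia.
have vu : tailed_windmill v u by rewrite /tailed_windmill tw_adjC.
case/boolP: (c u (vtx 0) \in tail_colours) => [|u_off].
  exact: tail_add2_le_of_spoke_on_tail uv.
case/boolP: (c v (vtx 0) \in tail_colours) => [|v_off].
  exact: tail_add2_le_of_spoke_on_tail vu.
apply: (off_tail_colours_le (s := [:: c u (vtx 0); c v (vtx 0)])).
  rewrite /= inE spoke_colours_neq //.
  by apply/eqP => /(congr1 (@nat_of_ord _)); rewrite !vtxK; lia.
by rewrite /= u_off v_off.
Qed.

Lemma tail_add_blades_le_ncolours : L + d <= K.
Proof.
pose u j := vtx (L.+1 + 2 * j); pose v j := vtx (L.+2 + 2 * j).
pose exit j := if c (u j) (vtx 0) \in tail_colours then v j else u j.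
have exit_in_blade j : j < d ->
    exit j = L.+1 + 2 * j :> nat \/ exit j = L.+2 + 2 * j :> nat.
  by move=> lt_jd; rewrite /exit /u /v; case: ifP => _; rewrite vtxK; lia.
have exit_off j : j < d -> c (exit j) (vtx 0) \notin tail_colours.
  move=> lt_jd; rewrite /exit; case: ifPn => // u_on.
  have [Lu Lv] : L < u j /\ L < v j by rewrite !vtxK; lia.
  have uv : tailed_windmill (u j) (v j) by rewrite /tailed_windmill /tw_adj !vtxK; lia.
  by have [|[_ v_off]] := blade_exit Lu Lv uv; first by rewrite u_on.
have := off_tail_colours_le (s := [seq c (exit j) (vtx 0) | j <- iota 0 d]).
rewrite size_map size_iota; apply.
  rewrite map_inj_in_uniq ?iota_uniq // => i j.
  rewrite !mem_iota => /andP [_ lt_id] /andP [_ lt_jd].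
  have := exit_in_blade i lt_id; have := exit_in_blade j lt_jd.
  move=> exit_j exit_i; apply: contra_eq => ij; apply: spoke_colours_neq; try lia.
  by apply/eqP => /(congr1 (@nat_of_ord _)); lia.
apply/allP => x /mapP [j]; rewrite mem_iota => /andP [_ lt_jd] ->.
exact: exit_off.
Qed.

End LowerBound.

Lemma prc_tailed_windmill_ge : L + maxn 2 d <= prc tailed_windmill.
Proof.
have [[c [c_sym c_proper c_rainbow]] _] :=
  least_spec (proper_rainbow_colouring_exists connected_tailed_windmill).
have := tail_add2_le_ncolours c_sym c_proper c_rainbow.
have := tail_add_blades_le_ncolours c_sym c_proper c_rainbow.
rewrite /prc; lia.
Qed.

End TailedWindmill.

Theorem theorem3p4 (k t : nat) (ht : 1 <= t) (hkt : t <= k) :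
  exists (n : nat) (e : rel 'I_n),
    [/\ simple_graph e, connected_graph e,
        max_degree e = 2 * t ^ 2 + 1,
        diameter e = 2 * t ^ 2 + 1 + k
      & rc e + t <= prc e].
Proof.
(* The construction does not need [t <= k]. *)
pose L := 2 * t ^ 2 + k; pose d := t ^ 2.
have L_gt0 : 0 < L by lia.
have d_gt0 : 0 < d by rewrite expn_gt0 ht.
exists (maxv L d).+1, (@tailed_windmill L d); split.
- exact: simple_tailed_windmill.
- exact: connected_tailed_windmill.
- by rewrite max_degree_tailed_windmill // addn1.
- by rewrite diameter_tailed_windmill // addn1 addSn.
- have := @rc_tailed_windmill_le L d L_gt0.
  have := prc_tailed_windmill_ge L_gt0 d_gt0.
  rewrite /tw_ncol; case: (eqVneq t 1) => [t1|t_ne1].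
    have d1 : d = 1 by rewrite /d t1.
    by rewrite d1 /=; lia.
  have d_large : t + 2 <= d by rewrite /d -mulnn; nia.
  by rewrite ifN; [lia | apply/eqP; lia].
Qed.
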